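(* Let $N\ge3$ be odd, let $A=A(h)$ and $C=e_2^T$ be as in the context, and assume $h_\alpha,h_\beta,h_1,\dots,h_{N-1}$ are all nonzero. Let $P$ be the $(N+2)\times(N+2)$ matrix whose first $N+1$ rows are $C,CA,\dots,CA^{N}$ and whose last row is $(0,\dots,0,1)$, partitioned as $$P=\begin{pmatrix}\bar P & \mathbf p\\ \mathbf 0^T & 1\end{pmatrix},\qquad \bar P\in\mathbb{R}^{(N+1)\times(N+1)},\ \mathbf p\in\mathbb{R}^{N+1}.$$ Then: (i) $\mathbf p=\big(0,\dots,0,\ h_\beta\prod_{i=1}^{N-1}h_i\big)^T$; (ii) $\det\bar P=h_\alpha h_\beta^{N-1}h_{N-2}^3\prod_{i=1}^{(N-3)/2}h_{2i-1}^{N+2-2i}h_{2i}^{N-1-2i}\neq0$; (iii) with $K=h_\beta^{N-1}\prod_{i=1}^{N-2}h_i^{N-1-i}$, the last ($(N+1)$-th) column of $\bar P^{-1}$ has entries $(\bar P^{-1})_{k,N+1}=0$ for every even $k$, $(\bar P^{-1})_{1,N+1}=-K/\det\bar P$, and for odd $k$ with $3\le k\le N$, $$(\bar P^{-1})_{k,N+1}=-\frac{K}{\det\bar P}\cdot\frac{h_\alpha\prod_{j=1}^{(k-3)/2}h_{2j-1}}{h_\beta\prod_{j=1}^{(k-3)/2}h_{2j}}.$$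
   Context: For an integer $N\ge1$ and real parameters $h=(h_\alpha,h_\beta,h_1,\dots,h_{N-1})$, set $(c_1,c_2,c_3,\dots,c_{N+1})=(h_\alpha,h_\beta,h_1,\dots,h_{N-1})$ and let $A(h)$ be the real $(N+2)\times(N+2)$ tridiagonal matrix with $A_{j,j+1}=c_j$, $A_{j+1,j}=-c_j$ for $j=1,\dots,N+1$ and all other entries zero. $e_j$ denotes the $j$-th standard basis column vector; empty products equal $1$. *)

(* Indices are 0-based: paper index k corresponds to k-1 here. *)
From HB Require Import structures.
From mathcomp Require Import all_boot all_order all_algebra.
Set Implicit Arguments. Unset Strict Implicit. Unset Printing Implicit Defensive.
Import Order.TTheory GRing.Theory Num.Theory.
Local Open Scope ring_scope.

Section Defs.
Variable R : realFieldType.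

(* (c_1, c_2, c_3, ..., c_{N+1}) = (ha, hb, h_1, ..., h_{N-1});
   cc k = c_{k+1} (0-based), hs j = h_j (1-based as in the paper). *)
Definition cc (ha hb : R) (hs : nat -> R) (k : nat) : R :=
  match k with 0 => ha | 1 => hb | k'.+1 => hs k' end.

Definition Amat (N : nat) (ha hb : R) (hs : nat -> R) : 'M[R]_(N.+2) :=
  \matrix_(i, j) (if (j : nat) == i.+1 then cc ha hb hs i
                  else if (i : nat) == j.+1 then - cc ha hb hs j else 0).

Definition Cvec (N : nat) : 'rV[R]_(N.+2) := \row_(j < N.+2) ((j : nat) == 1%N)%:R.

Definition Pmat (N : nat) (ha hb : R) (hs : nat -> R) : 'M[R]_(N.+2) :=
  \matrix_(i < N.+2, j < N.+2)
    (if (i < N.+1)%N then (Cvec N *m Amat N ha hb hs ^+ i) 0 j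
     else ((j : nat) == N.+1)%:R).

Definition Pbar (N : nat) (ha hb : R) (hs : nat -> R) : 'M[R]_(N.+1) :=
  \matrix_(i < N.+1, j < N.+1)
    Pmat N ha hb hs (widen_ord (leqnSn _) i) (widen_ord (leqnSn _) j).

Definition pvec (N : nat) (ha hb : R) (hs : nat -> R) : 'cV[R]_(N.+1) :=
  \col_(i < N.+1) Pmat N ha hb hs (widen_ord (leqnSn _) i) ord_max.

End Defs.

From HB Require Import structures.
From mathcomp Require Import all_boot all_order all_algebra.
From mathcomp Require Import zify ring.
Import Order.TTheory GRing.Theory Num.Theory.
Set Implicit Arguments. Unset Strict Implicit. Unset Printing Implicit Defensive.
Local Open Scope ring_scope.

(* The row C A^i of P is supported on the first i+2 coordinates, with entry
   c_2 ... c_(i+1) in position i+2, so Pbar is lower Hessenberg.  The sequence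
   y_1 = 1, y_2 = 0, y_(k+2) = c_k y_k / c_(k+1) satisfies A (y, 0) = gamma e_(N+1)
   (oddness of N makes y_(N+1) vanish), hence Pbar y = beta e_(N+1).  Multiplying
   by the adjugate gives beta * adj(Pbar)_(k,N+1) = det Pbar * y_k: for k = 1
   this computes det Pbar from a cofactor whose minor is triangular with
   diagonal entries c_2 ... c_(i+1), and for general k it shows that the last
   column of the inverse is proportional to y. *)

Lemma big_nat_double (T : Type) (idx : T) (op : Monoid.law idx) (F : nat -> T) n :
  \big[op/idx]_(1 <= k < n.*2.+1) F k =
  \big[op/idx]_(1 <= i < n.+1) op (F i.*2.-1) (F i.*2).
Proof.
elim: n => [|n IH]; first by rewrite !big_geq.
rewrite doubleS big_nat_recr // big_nat_recr //= IH.
by rewrite [in RHS]big_nat_recr //= Monoid.mulmA.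
Qed.

Lemma prod_nat_neq0 (R : idomainType) (F : nat -> R) m n :
  (forall k, (m <= k < n)%N -> F k != 0) -> \prod_(m <= k < n) F k != 0.
Proof.
move=> F_neq0; rewrite prodf_seq_neq0.
by apply/allP => k; rewrite mem_index_iota => /F_neq0.
Qed.

Lemma adj_col_of_mulmx (R : comNzRingType) n (M : 'M[R]_n) (y : 'cV_n) j b :
  M *m y = b *: delta_mx j 0 -> b *: col j (\adj M) = \det M *: y.
Proof.
by move=> My; rewrite colE scalemxAr -My mulmxA mul_adj_mx mul_scalar_mx.
Qed.

Section CoefficientProducts.
Variables (R : realFieldType) (ha hb : R) (hs : nat -> R).
Local Notation c := (cc ha hb hs).

Definition cprod (i : nat) : R := \prod_(1 <= k < i.+1) c k.

Fixpoint yseq (k : nat) : R :=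
  if k is k'.+2 then c k' * yseq k' / c k'.+1 else (k == 0)%:R.

Lemma yseqSS k : yseq k.+2 = c k * yseq k / c k.+1.
Proof. by []. Qed.

Lemma cprodS n : cprod n.+1 = cprod n * c n.+1.
Proof. by rewrite /cprod big_nat_recr. Qed.

Lemma cprod_closed n : cprod n.+1 = hb * \prod_(1 <= k < n.+1) hs k.
Proof.
elim: n => [|n IH]; first by rewrite cprodS /cprod !big_geq // mul1r mulr1.
by rewrite cprodS IH (big_nat_recr n.+1) //= mulrA.
Qed.

Lemma prod_cprod n :
  \prod_(i < n.+1) cprod i = hb ^+ n * \prod_(1 <= k < n) hs k ^+ (n - k).
Proof.
elim: n => [|n IH]; first by rewrite big_ord1 /cprod !big_geq // mulr1.
rewrite big_ord_recr /= IH cprod_closed exprS.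
under [in RHS]eq_big_nat => k /andP[_ k_le] do rewrite subSn // exprSr.
rewrite big_split /=; case: n {IH} => [|n]; first by rewrite !big_geq //; ring.
rewrite [X in _ = _ * (X * _)]big_nat_recr //= subnn mulr1; ring.
Qed.

Lemma yseq_odd k : odd k -> yseq k = 0.
Proof.
move=> k_odd; rewrite -[k]odd_double_half k_odd add1n.
by elim: k./2 => [|m IH] //; rewrite doubleS yseqSS IH mulr0 mul0r.
Qed.

Lemma yseq_even m : yseq m.+1.*2 =
  ha * \prod_(1 <= j < m.+1) hs j.*2.-1 / (hb * \prod_(1 <= j < m.+1) hs j.*2).
Proof.
elim: m => [|m IH]; first by rewrite !big_geq //= !mulr1.
rewrite doubleS yseqSS IH !(big_nat_recr m.+1) //= doubleS /= !invfM; ring.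
Qed.

Lemma cprod_mul_prod_cprod n : cprod n.+1 * \prod_(i < n.+2) cprod i =
  hb ^+ n.+2 * \prod_(1 <= k < n.+1) hs k ^+ (n.+2 - k).
Proof.
rewrite prod_cprod cprod_closed mulrACA -exprS -big_split /=; congr (_ * _).
by apply: eq_big_nat => k /andP[_ k_le]; rewrite -exprS -subSn // ltnW.
Qed.

Lemma det_factors_closed N : (3 <= N)%N -> odd N -> hb != 0 ->
  (forall i, (1 <= i <= N.-1)%N -> hs i != 0) ->
  c N.-1 * yseq N.-1 * cprod N.-1 * \prod_(i < N) cprod i =
  ha * hb ^+ N.-1 * hs (N - 2)%N ^+ 3 *
    \prod_(1 <= i < ((N - 3)./2).+1)
       (hs i.*2.-1 ^+ (N.+2 - i.*2) * hs i.*2 ^+ (N.-1 - i.*2)).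
Proof.
move=> N_ge3 N_odd hb_neq0 hs_neq0.
have [M defN] : exists M, N = M.*2.+3.
  by exists (N./2).-1; move: (odd_double_half N); rewrite N_odd; lia.
have even_neq0 : \prod_(1 <= j < M.+1) hs j.*2 != 0.
  by apply: prod_nat_neq0 => k k_le; apply: hs_neq0; lia.
have -> : (N - 2 = M.*2.+1)%N by lia.
have -> : ((N - 3)./2 = M)%N by rewrite defN -addnn; lia.
have pairs : \prod_(1 <= i < M.+1)
    (hs i.*2.-1 ^+ (N.+2 - i.*2) * hs i.*2 ^+ (N.-1 - i.*2)) *
  \prod_(1 <= j < M.+1) hs j.*2 =
  \prod_(1 <= j < M.+1) hs j.*2.-1 * \prod_(1 <= k < M.*2.+1) hs k ^+ (N - k).
  rewrite -big_split big_nat_double -big_split; apply: eq_big_nat => i i_le /=.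
  rewrite (_ : N.+2 - i.*2 = (N - i.*2.-1).+1)%N; last lia.
  rewrite (_ : N - i.*2 = (N.-1 - i.*2).+1)%N; last lia.
  by rewrite !exprS; ring.
subst N; rewrite -[(M.*2.+3).-1]/(M.+1.*2) -[c M.+1.*2]/(hs M.*2.+1).
rewrite yseq_even -mulrA cprod_mul_prod_cprod (big_nat_recr M.*2.+1) //.
(* refold the monoid operation produced by big_nat_recr into ( * ) *)
rewrite -[X in hb ^+ _ * X]/(_ * _) exprS doubleS.
rewrite (_ : M.*2.+3 - M.*2.+1 = 2)%N; last lia.
rewrite -[X in _ = _ * X](mulfK even_neq0) pairs.
by field; rewrite hb_neq0 even_neq0.
Qed.

End CoefficientProducts.

Section ObservabilityMatrix.
Variables (R : realFieldType) (N : nat) (ha hb : R) (hs : nat -> R).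
Local Notation c := (cc ha hb hs).
Local Notation A := (Amat N ha hb hs).
Local Notation P := (Pbar N ha hb hs).
Local Notation cprod := (cprod ha hb hs).
Local Notation yseq := (yseq ha hb hs).

Definition krylov_row (i : nat) : 'rV[R]_(N.+2) := Cvec R N *m A ^+ i.

Lemma krylov_rowS i : krylov_row i.+1 = krylov_row i *m A.
Proof. by rewrite /krylov_row exprSr -mulmxE mulmxA. Qed.

Lemma Amat_far (k j : 'I_N.+2) : (k.+1 < j)%N -> A k j = 0.
Proof. by move=> lt_kj; rewrite mxE !ifN_eq //; apply/eqP; lia. Qed.

Lemma Amat_super (k j : 'I_N.+2) : j = k.+1 :> nat -> A k j = c k.
Proof. by move=> def_j; rewrite mxE def_j eqxx. Qed.

Lemma krylov_row_eq0 i (j : 'I_N.+2) : (i.+1 < j)%N -> krylov_row i 0 j = 0.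
Proof.
elim: i j => [|i IH] j lt_ij.
  by rewrite /krylov_row mulmx1 mxE; case: eqP => // ?; lia.
rewrite krylov_rowS mxE big1 // => k _.
have [lt_ik|le_ki] := ltnP i.+1 k; first by rewrite IH ?mul0r.
by rewrite Amat_far ?mulr0 //; lia.
Qed.

Lemma krylov_row_lead i (j : 'I_N.+2) : j = i.+1 :> nat -> krylov_row i 0 j = cprod i.
Proof.
elim: i j => [|i IH] j def_j.
  by rewrite /krylov_row mulmx1 mxE def_j /cprod big_geq.
have lt_i1 : (i.+1 < N.+2)%N by have := ltn_ord j; lia.
rewrite krylov_rowS mxE (bigD1 (Ordinal lt_i1)) //= big1 ?addr0.
  by rewrite (IH (Ordinal lt_i1)) // Amat_super // cprodS.
move=> k /eqP k_neq.
have {}k_neq : k <> i.+1 :> nat by move=> def_k; apply: k_neq; apply: val_inj.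
have [lt_ik|le_ki] := ltnP i.+1 k; first by rewrite krylov_row_eq0 ?mul0r.
by rewrite Amat_far ?mulr0 //; lia.
Qed.

Lemma Pbar_krylov (i j : 'I_N.+1) : P i j = krylov_row i 0 (widen_ord (leqnSn _) j).
Proof. by rewrite !mxE /= ltn_ord. Qed.

Lemma pvec_krylov (i : 'I_N.+1) : pvec N ha hb hs i 0 = krylov_row i 0 ord_max.
Proof. by rewrite !mxE /= ltn_ord. Qed.

Lemma pvec_closed : (0 < N)%N ->
  pvec N ha hb hs =
    \col_(i < N.+1) (if (i : nat) == N then hb * \prod_(1 <= i < N) hs i else 0).
Proof.
move=> N_gt0; apply/matrixP => i j; rewrite ord1 [RHS]mxE pvec_krylov.
case: eqP => [def_i|ne_iN]; last by rewrite krylov_row_eq0 //=; have := ltn_ord i; lia.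
by rewrite krylov_row_lead def_i // -[in cprod N](prednK N_gt0) cprod_closed prednK.
Qed.

Lemma Pbar_minor (i j : 'I_N) :
  row' ord_max (col' ord0 P) i j = krylov_row i 0 (lift ord0 (widen_ord (leqnSn N) j)).
Proof.
rewrite 2!mxE Pbar_krylov; congr (krylov_row _ 0 _); [exact: lift_max | exact: val_inj].
Qed.

Lemma cofactor_Pbar : odd N -> cofactor P ord_max ord0 = - \prod_(i < N) cprod i.
Proof.
move=> N_odd; rewrite /cofactor /= addn0 -signr_odd N_odd expr1 mulN1r.
rewrite det_trig; last first.
  by apply/is_trig_mxP => i j lt_ij; rewrite Pbar_minor krylov_row_eq0.
by congr (- _); apply: eq_bigr => i _; rewrite Pbar_minor krylov_row_lead.
Qed.

Lemma Amat_mul_col (f : nat -> R) (i : 'I_N.+2) :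
  (A *m \col_(k < N.+2) f k) i 0 =
  (if (i.+1 < N.+2)%N then c i * f i.+1 else 0) -
  (if (0 < i)%N then c i.-1 * f i.-1 else 0).
Proof.
have entry k : A i k * (\col_(k < N.+2) f k) k 0 =
    (if k == i.+1 :> nat then c i * f k else 0) -
    (if k == i.-1 :> nat then (if (0 < i)%N then c k * f k else 0) else 0).
  rewrite !mxE; case: eqP => [->|ne_k_i1]; first by rewrite ifN_eq ?subr0 //; apply/eqP; lia.
  case: eqP => [def_i|ne_i_k1]; first by rewrite ifT ?ifT ?sub0r ?mulNr //; [apply/eqP|]; lia.
  rewrite mul0r sub0r; case: eqP => [def_k|_]; last by rewrite oppr0.
  by case: ifP => [i_gt0|_]; [lia | rewrite oppr0].
have lt_pred : (i.-1 < N.+2)%N by apply: leq_ltn_trans (leq_pred i) (ltn_ord i).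
rewrite mxE (eq_bigr _ (fun k _ => entry k)) sumrB -!big_mkcond.
rewrite (big_ord1_eq +%R (fun k => c i * f k)).
by rewrite (big_ord1_eq +%R (fun k => if (0 < i)%N then c k * f k else 0)) lt_pred.
Qed.

Lemma Pbar_mul_col (f : nat -> R) (i : 'I_N.+1) :
  (P *m \col_(k < N.+1) f k) i 0 =
  (krylov_row i *m \col_(k < N.+2) (if (k < N.+1)%N then f k else 0)) 0 0.
Proof.
rewrite [LHS]mxE [RHS]mxE [RHS]big_ord_recr /= [X in _ + _ * X]mxE ltnn mulr0 addr0.
by apply: eq_bigr => k _; rewrite Pbar_krylov !mxE /= ltn_ord.
Qed.

Section KernelVector.
Hypothesis N_odd : odd N.
Hypothesis c_neq0 : forall i, (1 <= i <= N.-1)%N -> c i != 0.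

Lemma Amat_mul_yseq :
  A *m \col_(k < N.+2) (if (k < N.+1)%N then yseq k else 0) =
  - (c N.-1 * yseq N.-1) *: delta_mx (widen_ord (leqnSn _) ord_max) 0.
Proof.
apply/matrixP => i j; rewrite ord1.
rewrite (Amat_mul_col (fun k => if (k < N.+1)%N then yseq k else 0)) !mxE eqxx andbT.
have -> : (i == widen_ord (leqnSn _) ord_max) = (i == N :> nat) by [].
have lt_iN2 := ltn_ord i.
have [lt_iN|gt_iN|->] := ltngtP i N; last first.
- have N_gt0 : (0 < N)%N by case: (N) N_odd.
  rewrite ltnn mulr0 if_same sub0r N_gt0 (_ : (N.-1 < N.+1) = true)%N ?mulr1 //; lia.
- rewrite mulr0 (_ : (i.+1 < N.+2) = false)%N; last lia.
  have -> : i = N.+1 :> nat by lia.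
  by rewrite ltnSn /= (yseq_odd ha hb hs N_odd) mulr0 subr0.
rewrite mulr0 (_ : (i.+1 < N.+2) = true)%N; last lia.
rewrite (_ : (i.+1 < N.+1) = true)%N; last lia.
have [-> | i_gt0] := posnP i; first by rewrite (yseq_odd ha hb hs (isT : odd 1)) mulr0 subr0.
rewrite (_ : (i.-1 < N.+1) = true)%N; last lia.
have c_i_neq0 : c i != 0 by apply: c_neq0; lia.
have yseq_rec : yseq i.+1 = c i.-1 * yseq i.-1 / c i by rewrite -(prednK i_gt0).
by rewrite yseq_rec mulrCA divff ?mulr1 ?subrr.
Qed.

Lemma Pbar_mul_yseq :
  P *m \col_(k < N.+1) yseq k =
  (- (c N.-1 * yseq N.-1) * cprod N.-1) *: delta_mx ord_max 0.
Proof.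
apply/matrixP => i j.
rewrite ord1 Pbar_mul_col [RHS]mxE [delta_mx _ _ _ _]mxE eqxx andbT.
have -> : (i == ord_max) = (i == N :> nat) by [].
case: i => -[|i] lt_i /=.
  have N_gt0 : (0 < N)%N by case: (N) N_odd.
  rewrite eq_sym (gtn_eqF N_gt0) mulr0 /krylov_row mulmx1 mxE big1 // => k _.
  rewrite !mxE; case: eqP => [->|_]; last by rewrite mul0r.
  by rewrite (yseq_odd ha hb hs (isT : odd 1)) if_same mulr0.
rewrite krylov_rowS -mulmxA Amat_mul_yseq -scalemxAr -colE 2!mxE.
have [def_N|ne_iN] := eqVneq i.+1 N.
  by rewrite krylov_row_lead -def_N ?mulr1.
by rewrite krylov_row_eq0 ?mulr0 //=; lia.
Qed.

Lemma det_Pbar : \det P = c N.-1 * yseq N.-1 * cprod N.-1 * \prod_(i < N) cprod i.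
Proof.
have := congr1 (fun v : 'cV_(N.+1) => v ord0 0) (adj_col_of_mulmx Pbar_mul_yseq).
by rewrite !mxE (cofactor_Pbar N_odd) /= mulr1 => <-; ring.
Qed.

Lemma invmx_Pbar_col k : \det P != 0 ->
  invmx P k ord_max = - (\prod_(i < N) cprod i) / \det P * yseq k.
Proof.
move=> det_neq0.
have := congr1 (fun v : 'cV_(N.+1) => v k 0) (adj_col_of_mulmx Pbar_mul_yseq).
rewrite !mxE => adj_yseq.
set b := - (c N.-1 * yseq N.-1) * cprod N.-1 in adj_yseq.
have b_neq0 : b != 0.
  move: det_neq0; rewrite det_Pbar /b mulNr oppr_eq0.
  by apply: contraNneq => ->; rewrite mul0r.
have cofactor_yseq : cofactor P ord_max k = - (\prod_(i < N) cprod i) * yseq k.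
  by apply: (mulfI b_neq0); rewrite adj_yseq det_Pbar /b; ring.
by rewrite /invmx unitmxE unitfE det_neq0 !mxE cofactor_yseq mulrCA mulrA.
Qed.

End KernelVector.

End ObservabilityMatrix.

Theorem lemma4 (R : realFieldType) (N : nat) (ha hb : R) (hs : nat -> R)
  (HN3 : (3 <= N)%N) (HNodd : odd N)
  (Hha : ha != 0) (Hhb : hb != 0)
  (Hhs : forall i : nat, (1 <= i <= N.-1)%N -> hs i != 0) :
  let P := Pbar N ha hb hs in
  let K := hb ^+ N.-1 * \prod_(1 <= i < N.-1) hs i ^+ (N.-1 - i) in
  (* (i) *)
  pvec N ha hb hs =
    \col_(i < N.+1) (if (i : nat) == N then hb * \prod_(1 <= i < N) hs i else 0)
  (* (ii) *)
  /\ \det P = ha * hb ^+ N.-1 * hs (N - 2)%N ^+ 3 *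
        \prod_(1 <= i < ((N - 3)./2).+1)
           (hs (i.*2.-1) ^+ (N.+2 - i.*2) * hs (i.*2) ^+ (N.-1 - i.*2))
  /\ \det P != 0
  (* (iii); row k0 (0-based) is paper row k = k0+1 *)
  /\ (forall k0 : 'I_N.+1, ~~ odd k0.+1 -> invmx P k0 ord_max = 0)
  /\ invmx P ord0 ord_max = - K / \det P
  /\ (forall k0 : 'I_N.+1, odd k0.+1 -> (3 <= k0.+1 <= N)%N ->
        invmx P k0 ord_max =
          - K / \det P *
          ((ha * \prod_(1 <= j < ((k0.+1 - 3)./2).+1) hs (j.*2.-1)) /
           (hb * \prod_(1 <= j < ((k0.+1 - 3)./2).+1) hs (j.*2)))).
Proof.
move=> P K.
have c_neq0 i : (1 <= i <= N.-1)%N -> cc ha hb hs i != 0.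
  by case: i => [|[|i]] i_range; [lia | exact: Hhb | apply: Hhs; lia].
have K_def : \prod_(i < N) cprod ha hb hs i = K.
  by rewrite /K -(prod_cprod ha) prednK //; lia.
have det_eq := det_Pbar HNodd c_neq0; rewrite det_factors_closed // in det_eq.
have det_neq0 : \det P != 0.
  have hs_N2 : hs (N - 2)%N != 0 by apply: Hhs; lia.
  rewrite det_eq !mulf_neq0 ?expf_neq0 //; apply: prod_nat_neq0 => i i_range.
  by rewrite mulf_neq0 ?expf_neq0 //; apply: Hhs; lia.
have invP k : invmx P k ord_max = - K / \det P * yseq ha hb hs k.
  by rewrite invmx_Pbar_col // K_def.
split; first by apply: pvec_closed; lia.
do 2!split => //.
split.
  by move=> k0; rewrite /= negbK => k0_odd; rewrite invP yseq_odd ?mulr0.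
split; first by rewrite invP mulr1.
move=> k0 k0_even k0_range.
have [m def_k0] : exists m, k0 = m.+1.*2 :> nat.
  exists (k0./2).-1; move: (odd_double_half k0) k0_even; case: (odd k0) => //=; lia.
have -> : ((k0.+1 - 3)./2 = m)%N by rewrite def_k0 -addnn; lia.
by rewrite invP def_k0 yseq_even.
Qed.
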